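(* Let $z\ge 1$ be an integer and let $n[z,1;4]$ be the order of a $[z,1;4]$-mixed cage. Then $$n[z,1;4]\le\begin{cases}3(z+1) & \text{if } z \text{ is odd},\\ 3z+2 & \text{if } z \text{ is even}.\end{cases}$$ Moreover, equality holds for $z\in\{1,2\}$, i.e. $n[1,1;4]=6$ and $n[2,1;4]=8$.
   Context: A mixed graph is a finite simple graph that may contain both edges and arcs. A $[z,r;g]$-mixed graph is a mixed graph in which every vertex is the tail of exactly $z$ arcs, the head of exactly $z$ arcs, and is incident with exactly $r$ edges, and whose girth is $g$. Walks traverse edges in either direction and arcs only in their direction; a cycle is a closed walk with no repeated vertices (other than start = end) and no repeated edge or arc; the girth is the length of a shortest cycle. A $[z,r;g]$-mixed cage is a $[z,r;g]$-mixed graph of minimum order. *)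

From mathcomp Require Import all_boot.
Set Implicit Arguments. Unset Strict Implicit. Unset Printing Implicit Defensive.

(* A mixed graph on the vertex set 'I_n: E is the (undirected) edge relation,
   A the arc relation (A u v : there is an arc with tail u and head v). *)
Definition mixed_graph (n : nat) (E A : rel 'I_n) : Prop :=
  [/\ irreflexive E, symmetric E, irreflexive A &
      forall u v, E u v -> ~~ A u v].

Definition zr_regular (n : nat) (E A : rel 'I_n) (z r : nat) : Prop :=
  forall u : 'I_n,
    [/\ #|[set v | A u v]| = z, #|[set v | A v u]| = z & #|[set v | E u v]| = r].

Definition link_elt (n : nat) (isarc : bool) (u v : 'I_n)
  : ('I_n * 'I_n) + {set 'I_n} :=
  if isarc then inl (u, v) else inr [set u; v].

(* A cycle of length k: distinct vertices vs_0..vs_(k-1), where step i goes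
   from vs_i to vs_(i+1 mod k) along an arc (bs_i = true, in its direction)
   or an edge (bs_i = false, either direction), and no edge/arc is used twice. *)
Definition has_cycle_of_length (n : nat) (E A : rel 'I_n) (k : nat) : Prop :=
  0 < k /\
  exists (vs : k.-tuple 'I_n) (bs : k.-tuple bool),
    [/\ uniq vs,
        forall i : 'I_k,
          if tnth bs i then A (tnth vs i) (tnth vs (ordS i))
          else E (tnth vs i) (tnth vs (ordS i))
      & uniq [seq link_elt (tnth bs i) (tnth vs i) (tnth vs (ordS i)) | i : 'I_k]].

Definition has_girth (n : nat) (E A : rel 'I_n) (g : nat) : Prop :=
  has_cycle_of_length E A g /\ forall k, k < g -> ~ has_cycle_of_length E A k.

Definition mixed_zrg_graph (n : nat) (E A : rel 'I_n) (z r g : nat) : Prop :=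
  [/\ mixed_graph E A, zr_regular E A z r & has_girth E A g].

Definition mixed_cage_order (z r g m : nat) : Prop :=
  (exists E A : rel 'I_m, mixed_zrg_graph E A z r g) /\
  forall (n : nat) (E A : rel 'I_n), mixed_zrg_graph E A z r g -> m <= n.

From mathcomp Require Import all_boot all_algebra zify.
From Stdlib Require Import Classical Wf_nat.

Set Implicit Arguments.
Unset Strict Implicit.
Unset Printing Implicit Defensive.

Import GRing.Theory.

(* Upper bound: for z = 2k + 1 + e (e = 0 or 1) take the circulant mixed graph on
   Z_2m, m = 3(k+1) + e, whose edges join x and x + m and whose arcs go from x
   to x + d for d in (0, k+1] or (m, m + k + 1 + e).  A 2- or 3-cycle would give
   two or three such "distances" (m counting for the edge) summing to 0 mod 2m,
   which they never do, while 0 -> k+1 -> 2(k+1) -> 3(k+1) -> 0 closes a 4-cycle.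
   Lower bound: with girth 4 the partner w of a vertex v, v itself and the z
   out- and z in-neighbours of v are 2z + 2 distinct vertices; for z <= 2 some
   vertex lies outside them, and the order is even because the edges form a
   perfect matching, so the order is at least 2z + 4. *)

Lemma matching_order_even n (E : rel 'I_n) : symmetric E -> irreflexive E ->
  (forall u, #|[set v | E u v]| = 1) -> ~~ odd n.
Proof.
move=> E_sym E_irr E_deg1.
pose half R := \sum_(u < n) \sum_(v < n) (E u v && R u v : nat).
have sum_deg : \sum_(u < n) \sum_(v < n) (E u v : nat) = n.
  rewrite -[RHS]card_ord -sum1_card; apply: eq_bigr => u _.
  rewrite -(E_deg1 u) -sum1_card [RHS]big_mkcond.
  by apply: eq_bigr => v _; rewrite inE.
have split_order : \sum_(u < n) \sum_(v < n) (E u v : nat) =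
    half (fun u v => u < v) + half (fun u v => v < u).
  rewrite -big_split; apply: eq_bigr => u _; rewrite -big_split.
  apply: eq_bigr => v _ /=; case Euv: (E u v) => //=.
  by case: (ltngtP u v) => // /ord_inj uv; rewrite uv E_irr in Euv.
have half_sym : half (fun u v => v < u) = half (fun u v => u < v).
  by rewrite /half exchange_big; apply: eq_bigr => u _; apply: eq_bigr => v _; rewrite E_sym.
by rewrite -sum_deg split_order half_sym addnn odd_double.
Qed.

Lemma mixed_cage_order_exists z r g N :
  (exists E A : rel 'I_N, mixed_zrg_graph E A z r g) ->
  exists m, mixed_cage_order z r g m /\ m <= N.
Proof.
pose P m := exists E A : rel 'I_m, mixed_zrg_graph E A z r g.
move=> PN; have [m [[Pm m_min] _]] :
    has_unique_least_element le P.
  by apply: dec_inh_nat_subset_has_unique_least_element => [m|]; [exact: classic | exists N].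
exists m; split; last by apply/leP; exact: m_min.
by split=> // n E A G; apply/leP; apply: m_min; exists E, A.
Qed.

Section MixedGraph.
Variables (n : nat) (E A : rel 'I_n).

Definition step (arc : bool) (x y : 'I_n) := if arc then A x y else E x y.

Lemma cycle_of_steps k (vs : k.-tuple 'I_n) (bs : k.-tuple bool) :
  0 < k -> uniq vs -> (forall i j, ~~ tnth bs i -> ~~ tnth bs j -> i = j) ->
  (forall i, step (tnth bs i) (tnth vs i) (tnth vs (ordS i))) ->
  has_cycle_of_length E A k.
Proof.
move=> k_gt0 vs_uniq one_edge steps; split=> //; exists vs, bs; split=> //.
move/tuple_uniqP: vs_uniq => vs_inj.
rewrite map_inj_uniq ?enum_uniq // => i j; rewrite /link_elt.
case: (boolP (tnth bs i)) => bi; case: (boolP (tnth bs j)) => bj //.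
- by case=> /vs_inj.
- by move=> _; apply: one_edge.
Qed.

Lemma digon_cycle x y : x != y -> A x y -> A y x -> has_cycle_of_length E A 2.
Proof.
move=> xy Axy Ayx; apply: (@cycle_of_steps 2 [tuple x; y] [tuple true; true]) => //.
- by rewrite /= inE xy.
- by move=> [[|[|?]] ?] [[|[|?]] ?].
- by move=> [[|[|?]] ?].
Qed.

Lemma triangle_cycle x y u b0 b1 b2 : uniq [:: x; y; u] ->
  [&& b0 || b1, b1 || b2 & b0 || b2] ->
  step b0 x y -> step b1 y u -> step b2 u x -> has_cycle_of_length E A 3.
Proof.
move=> xyu_uniq one_edge s0 s1 s2.
apply: (@cycle_of_steps 3 [tuple x; y; u] [tuple b0; b1; b2]) => //.
- move=> [[|[|[|?]]] ?] [[|[|[|?]]] ?] //; rewrite !(tnth_nth false) /=;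
  by move: one_edge; clear s0 s1 s2; case: b0; case: b1; case: b2 => // *; apply: val_inj.
- by move=> [[|[|[|?]]] ?] //; rewrite !(tnth_nth false) !(tnth_nth x).
Qed.

Lemma square_cycle x0 x1 x2 x3 b : uniq [:: x0; x1; x2; x3] ->
  A x0 x1 -> A x1 x2 -> A x2 x3 -> step b x3 x0 -> has_cycle_of_length E A 4.
Proof.
move=> xs_uniq s0 s1 s2 s3.
apply: (@cycle_of_steps 4 [tuple x0; x1; x2; x3] [tuple true; true; true; b]) => //.
- by move=> [[|[|[|[|?]]]] ?] [[|[|[|[|?]]]] ?] //= *; apply: val_inj.
- by move=> [[|[|[|[|?]]]] ?] //; rewrite !(tnth_nth true) !(tnth_nth x0).
Qed.

Lemma cycle2_steps : has_cycle_of_length E A 2 ->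
  exists x y b c, [/\ step b x y, step c y x & b || c].
Proof.
move=> [_ [vs [bs [_ steps links_uniq]]]].
have succ0 : ordS ord0 = ord_max :> 'I_2 by apply: val_inj.
have succ1 : ordS ord_max = ord0 :> 'I_2 by apply: val_inj.
have enum2 : enum 'I_2 = [:: ord0; ord_max].
  by apply: (inj_map val_inj); rewrite val_enum_ord.
exists (tnth vs ord0), (tnth vs ord_max), (tnth bs ord0), (tnth bs ord_max); split.
- by move: (steps ord0); rewrite succ0.
- by move: (steps ord_max); rewrite succ1.
move: links_uniq; rewrite /image_mem enum2 /= /link_elt succ0 succ1.
by case: (tnth bs ord0); case: (tnth bs ord_max) => //=; rewrite setUC inE eqxx.
Qed.

Lemma cycle3_steps : has_cycle_of_length E A 3 ->
  exists x y u b0 b1 b2, [/\ step b0 x y, step b1 y u & step b2 u x].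
Proof.
move=> [_ [vs [bs [_ steps _]]]].
pose i1 : 'I_3 := inord 1.
exists (tnth vs ord0), (tnth vs i1), (tnth vs ord_max).
exists (tnth bs ord0), (tnth bs i1), (tnth bs ord_max).
have succ0 : ordS ord0 = i1 by apply: val_inj; rewrite /= inordK.
have succ1 : ordS i1 = ord_max by apply: val_inj; rewrite /= inordK.
have succ2 : ordS ord_max = ord0 :> 'I_3 by apply: val_inj.
by split; [move: (steps ord0) | move: (steps i1) | move: (steps ord_max)];
  rewrite ?succ0 ?succ1 ?succ2.
Qed.

Hypothesis mixedEA : mixed_graph E A.

Lemma edge_sym : symmetric E. Proof. by case: mixedEA. Qed.
Lemma edge_irr : irreflexive E. Proof. by case: mixedEA. Qed.
Lemma arc_irr : irreflexive A. Proof. by case: mixedEA. Qed.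
Lemma edge_not_arc u v : E u v -> ~~ A u v. Proof. by case: mixedEA => _ _ _; apply. Qed.

Lemma edge_neq u v : E u v -> u != v.
Proof. by apply: contraTneq => ->; rewrite edge_irr. Qed.

Lemma arc_neq u v : A u v -> u != v.
Proof. by apply: contraTneq => ->; rewrite arc_irr. Qed.

Lemma no_cycle1 : ~ has_cycle_of_length E A 1.
Proof.
move=> [_ [vs [bs [_ steps _]]]]; move: (steps ord0).
have -> : ordS ord0 = ord0 :> 'I_1 by apply: val_inj.
by case: (tnth bs ord0); rewrite ?edge_irr ?arc_irr.
Qed.

Section Girth4.
Variable z : nat.
Hypothesis regEA : zr_regular E A z 1.
Hypothesis no_cycle2 : ~ has_cycle_of_length E A 2.
Hypothesis no_cycle3 : ~ has_cycle_of_length E A 3.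

Lemma order_even : ~~ odd n.
Proof.
apply: matching_order_even; [exact: edge_sym | exact: edge_irr |].
by move=> u; case: (regEA u).
Qed.

Lemma edge_partner v : exists w, E v w.
Proof.
have [_ _ /eqP/cards1P [w Nv]] := regEA v.
by exists w; move: (set11 w); rewrite -Nv inE.
Qed.

Lemma arc_asym u v : A u v -> ~~ A v u.
Proof.
by move=> Auv; apply/negP => Avu; apply: no_cycle2; exact: digon_cycle (arc_neq Auv) _ _.
Qed.

Lemma no_arc_triangle x y u : A x y -> A y u -> A u x -> False.
Proof.
move=> Axy Ayu Aux; apply: no_cycle3; apply: (@triangle_cycle x y u true true true) => //.
by rewrite /= !inE negb_or (arc_neq Axy) (arc_neq Ayu) eq_sym (arc_neq Aux).
Qed.

Lemma no_edge_triangle v w x : E v w -> A w x -> A x v -> False.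
Proof.
move=> Evw Awx Axv; apply: no_cycle3; apply: (@triangle_cycle w x v true true false) => //.
by rewrite /= !inE negb_or (arc_neq Awx) (arc_neq Axv) eq_sym (edge_neq Evw).
Qed.

Definition nbhd v w := w |: (v |: ([set x | A v x] :|: [set x | A x v])).

Lemma card_nbhd v w : E v w -> #|nbhd v w| = (2 * z).+2.
Proof.
move=> Evw; have [out_z in_z _] := regEA v.
have Ewv : E w v by rewrite edge_sym.
have out_in : [disjoint [set x | A v x] & [set x | A x v]].
  by apply/pred0P => x /=; rewrite !inE; apply/negP => /andP [/arc_asym/negP].
rewrite /nbhd !cardsU1 cardsU (disjoint_setI0 out_in) cards0 out_z in_z subn0.
rewrite !inE arc_irr (negbTE (edge_neq Ewv)) (negbTE (edge_not_arc Evw)).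
by rewrite (negbTE (edge_not_arc Ewv)); lia.
Qed.

Lemma order_ge_of_outsider v w y : E v w -> y \notin nbhd v w -> (2 * z).+4 <= n.
Proof.
move=> Evw y_out; have := max_card (y |: nbhd v w).
rewrite cardsU1 y_out card_nbhd // card_ord add1n leq_eqVlt => /orP [/eqP n_odd|//].
by move: order_even; rewrite -n_odd /= oddM.
Qed.

Lemma outsider_of_new_out_nbr v w x : E v w -> A w x -> ~~ A v x -> x \notin nbhd v w.
Proof.
move=> Evw Awx notAvx; have Ewv : E w v by rewrite edge_sym.
rewrite !inE (negbTE notAvx) /=; apply/negP => /or3P [/eqP xw | /eqP xv | Axv].
- by rewrite xw arc_irr in Awx.
- by move: Awx; rewrite xv (negbTE (edge_not_arc Ewv)).
- exact: no_edge_triangle Evw Awx Axv.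
Qed.

(* Were x an out-neighbour of v, it would have the three in-neighbours v, w, o. *)
Lemma outsider_of_out_out v w o x : z <= 2 -> E v w -> A w =1 A v ->
  A v o -> A o x -> x \notin nbhd v w.
Proof.
move=> z_le2 Evw out_wv Avo Aox; have Awo : A w o by rewrite out_wv.
rewrite !inE; apply/negP => /or4P [/eqP xw | /eqP xv | Avx | Axv].
- by move: Aox; rewrite xw; apply/negP; exact: arc_asym.
- by move: Aox; rewrite xv; apply/negP; exact: arc_asym.
- have [_ in_x _] := regEA x.
  have three_in : o |: [set v; w] \subset [set y | A y x].
    by apply/subsetP => y; rewrite !inE => /orP [|/orP []] /eqP ->; rewrite ?out_wv.
  move: (subset_leq_card three_in); rewrite in_x cardsU1 cards2 !inE (edge_neq Evw).
  by rewrite ![o == _]eq_sym (negbTE (arc_neq Avo)) (negbTE (arc_neq Awo)); lia.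
- exact: no_arc_triangle Avo Aox Axv.
Qed.

Lemma exists_outsider v w : 0 < z <= 2 -> E v w -> exists y, y \notin nbhd v w.
Proof.
move=> z_range Evw; have [out_z _ _] := regEA v.
have [sub | /subsetPn [x]] := boolP ([set x | A w x] \subset [set x | A v x]); last first.
  by rewrite !inE => Awx notAvx; exists x; exact: outsider_of_new_out_nbr.
have out_wv : A w =1 A v.
  have [out_w _ _] := regEA w.
  have : [set x | A w x] == [set x | A v x] by rewrite eqEcard sub out_z out_w leqnn.
  by move/eqP/setP => out_eq y; move: (out_eq y); rewrite !inE.
have /card_gt0P [o] : 0 < #|[set x | A v x]| by rewrite out_z; lia.
rewrite inE => Avo; have [out_o _ _] := regEA o.
have /card_gt0P [x] : 0 < #|[set x | A o x]| by rewrite out_o; lia.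
by rewrite inE => Aox; exists x; apply: outsider_of_out_out Evw out_wv Avo Aox; case/andP: z_range.
Qed.

End Girth4.
End MixedGraph.

Lemma girth4_order_ge n z (E A : rel 'I_n) :
  0 < z <= 2 -> mixed_zrg_graph E A z 1 4 -> (2 * z).+4 <= n.
Proof.
move=> z_range [mixedEA regEA [[_ [vs _]] shorter]].
have [w Evw] := edge_partner regEA (tnth vs ord0).
have no_cycle2 := shorter 2 isT.
have [y y_out] := exists_outsider mixedEA regEA no_cycle2 (shorter 3 isT) z_range Evw.
exact: (order_ge_of_outsider mixedEA regEA no_cycle2 Evw y_out).
Qed.

Section Circulant.
Local Open Scope ring_scope.
Variables (n : nat) (h : 'I_n.+1) (S : pred nat).

Definition circ_edge : rel 'I_n.+1 := fun x y => y - x == h.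
Definition circ_arc : rel 'I_n.+1 := fun x y => S (y - x).
Definition circ_conn (d : 'I_n.+1) := S d || (d == h).

Hypotheses (h_neq0 : h != 0) (opp_h : - h = h) (S_0 : ~~ S 0%N) (S_h : ~~ S h).

Lemma circ_mixed : mixed_graph circ_edge circ_arc.
Proof.
split=> [x | x y | x | x y].
- by rewrite /circ_edge subrr eq_sym (negbTE h_neq0).
- by rewrite /circ_edge -opprB eqr_oppLR opp_h.
- by rewrite /circ_arc subrr (negbTE S_0).
- by rewrite /circ_edge /circ_arc => /eqP ->.
Qed.

Lemma circ_regular : zr_regular circ_edge circ_arc #|[set d : 'I_n.+1 | S d]| 1.
Proof.
move=> x; split.
- by rewrite -[RHS](card_preimset _ (addIr (- x))); apply: eq_card => y; rewrite !inE.
- by rewrite -[RHS](card_preimset _ (subrI x)); apply: eq_card => y; rewrite !inE.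
- by apply/eqP/cards1P; exists (h + x); apply/setP => y; rewrite !inE /circ_edge subr_eq.
Qed.

Lemma circ_step b x y : step circ_edge circ_arc b x y -> circ_conn (y - x).
Proof.
by rewrite /step /circ_conn /circ_arc /circ_edge; case: b => [-> | ->]; rewrite ?orbT.
Qed.

Lemma circ_no_cycle2 :
  (forall a b, circ_conn a -> circ_conn b -> a + b = 0 -> a = h) ->
  ~ has_cycle_of_length circ_edge circ_arc 2.
Proof.
move=> zero_sum2 /cycle2_steps [x [y [b [c [sxy syx]]]]].
have zero_xy : (y - x) + (x - y) = 0 by rewrite addrA subrK subrr.
have zero_yx : (x - y) + (y - x) = 0 by rewrite addrC.
have dxy := zero_sum2 _ _ (circ_step sxy) (circ_step syx) zero_xy.
have dyx := zero_sum2 _ _ (circ_step syx) (circ_step sxy) zero_yx.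
move: sxy syx; rewrite /step /circ_arc dxy dyx (negbTE S_h).
by case: b; case: c.
Qed.

Lemma circ_no_cycle3 :
  (forall a b c, circ_conn a -> circ_conn b -> circ_conn c -> a + b + c != 0) ->
  ~ has_cycle_of_length circ_edge circ_arc 3.
Proof.
move=> zero_sum3 /cycle3_steps [x [y [u [b0 [b1 [b2 [sxy syu sux]]]]]]].
have := zero_sum3 _ _ _ (circ_step sxy) (circ_step syu) (circ_step sux).
have -> : (y - x) + (u - y) = u - x by rewrite addrC addrA subrK.
by rewrite addrA subrK subrr eqxx.
Qed.

Lemma circ_cycle4 (g : 'I_n.+1) :
  uniq [:: 0; g; g *+ 2; g *+ 3] -> S g -> circ_conn (- g *+ 3) ->
  has_cycle_of_length circ_edge circ_arc 4.
Proof.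
move=> gs_uniq S_g back; apply: (square_cycle (b := S (- g *+ 3)) gs_uniq).
- by rewrite /circ_arc subr0.
- by rewrite /circ_arc mulr2n addrK.
- by rewrite /circ_arc mulrS addrK.
- by move: back; rewrite /circ_conn /step /circ_edge /circ_arc sub0r mulNrn; case: (S _).
Qed.

End Circulant.

Lemma Zp_add3_eq0 n (a b c : 'I_n.+1) :
  (a + b + c = 0)%R -> exists2 q, q < 3 & a + b + c = q * n.+1.
Proof.
move/(congr1 val) => /= /eqP; rewrite modnDml => /dvdnP [q sum_abc].
exists q => //; rewrite -(ltn_pmul2r (ltn0Sn n)) -sum_abc.
by have := ltn_ord a; have := ltn_ord b; have := ltn_ord c; lia.
Qed.

Lemma card_ord_range N a b : b <= N -> #|[set i : 'I_N | a <= i < b]| = b - a.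
Proof.
move=> le_bN; rewrite -sum1_card (eq_bigl (fun i : 'I_N => (a <= i) && (i < b))); last first.
  by move=> i; rewrite inE.
rewrite -(big_ord_widen_cond _ (leq a) (fun=> 1) le_bN).
rewrite (eq_bigl (fun i : 'I_b => xpredT i && (a <= i))) //.
by rewrite -(@big_geq_mkord _ _ addn a b xpredT (fun=> 1)) sum_nat_const_nat muln1.
Qed.

Section Construction.
Variables (k : nat) (e : bool).

Local Notation m := (3 * k.+1 + e).
(* The order 2m, written as a successor so that 'I_N carries the Z-module Z_2m. *)
Local Notation N := (2 * m).-1.+1.

Definition cage_arc_dist (d : nat) := (0 < d <= k.+1) || (m < d < m + k.+1 + e).

Definition cage_edge_dist : 'I_N := inZp m.

Definition cage_edge : rel 'I_N := circ_edge cage_edge_dist.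
Definition cage_arc : rel 'I_N := circ_arc cage_arc_dist.

Lemma val_cage_edge_dist : cage_edge_dist = m :> nat.
Proof. by rewrite /= modn_small //; lia. Qed.

Lemma cage_connE (d : 'I_N) :
  circ_conn cage_edge_dist cage_arc_dist d = (0 < d <= k.+1) || (m <= d < m + k.+1 + e).
Proof.
by rewrite /circ_conn -val_eqE; have := val_cage_edge_dist; rewrite /cage_arc_dist /=; lia.
Qed.

Lemma cage_zero_sum2 (a b : 'I_N) :
  circ_conn cage_edge_dist cage_arc_dist a -> circ_conn cage_edge_dist cage_arc_dist b ->
  (a + b = 0)%R -> a = cage_edge_dist.
Proof.
rewrite !cage_connE => conn_a conn_b; rewrite -[(a + b)%R]addr0.
move=> /Zp_add3_eq0 [q q_lt3]; rewrite [nat_of_ord 0%R]/= addn0 => sum_ab; apply: ord_inj.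
have := ltn_ord a; have := ltn_ord b; have := val_cage_edge_dist.
by case: q q_lt3 sum_ab => [|[|[|]]] // _; lia.
Qed.

Lemma cage_no_zero_sum3 (a b c : 'I_N) :
  circ_conn cage_edge_dist cage_arc_dist a -> circ_conn cage_edge_dist cage_arc_dist b ->
  circ_conn cage_edge_dist cage_arc_dist c -> (a + b + c != 0)%R.
Proof.
rewrite !cage_connE => conn_a conn_b conn_c; apply/eqP => /Zp_add3_eq0 [q].
by case: q => [|[|[|]]] // _; lia.
Qed.

Lemma card_cage_arc_dist : #|[set d : 'I_N | cage_arc_dist d]| = 2 * k + 1 + e.
Proof.
have -> : [set d : 'I_N | cage_arc_dist d] =
    [set d : 'I_N | 1 <= d < k.+2] :|: [set d : 'I_N | m.+1 <= d < m + k.+1 + e].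
  by apply/setP => d; rewrite !inE /cage_arc_dist; lia.
rewrite cardsU !card_ord_range; try lia.
have -> : [set d : 'I_N | 1 <= d < k.+2] :&: [set d : 'I_N | m.+1 <= d < m + k.+1 + e] = set0.
  by apply/setP => d; rewrite !inE; lia.
by rewrite cards0; lia.
Qed.

Lemma cage_square :
  has_cycle_of_length cage_edge cage_arc 4.
Proof.
pose g : 'I_N := inZp k.+1.
have val_gX i : i < 4 -> (g *+ i)%R = k.+1 * i :> nat.
  by move=> i_lt4; rewrite Zp_mulrn /= modnMml modn_small //; nia.
have val_g : nat_of_ord g = k.+1 by rewrite -[g]mulr1n val_gX // muln1.
apply: (circ_cycle4 (g := g)).
- rewrite !cons_uniq !in_cons !in_nil !orbF -!val_eqE andbT.
  have val_g2 : \val (g *+ 2)%R = k.+1 * 2 by exact: val_gX.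
  have val_g3 : \val (g *+ 3)%R = k.+1 * 3 by exact: val_gX.
  have val_0 : \val (0 : 'I_N)%R = 0 by [].
  by rewrite val_0 val_g2 val_g3 [\val g]val_g; lia.
- by rewrite /cage_arc_dist val_g; lia.
- have val_back : nat_of_ord (- g *+ 3)%R = (N - nat_of_ord (g *+ 3)%R) %% N.
    by rewrite mulNrn.
  by rewrite cage_connE val_back val_gX // modn_small; lia.
Qed.

Lemma cage_graph : mixed_zrg_graph cage_edge cage_arc (2 * k + 1 + e) 1 4.
Proof.
have h_neq0 : cage_edge_dist != 0%R.
  by apply/negP => /eqP h0; have := val_cage_edge_dist; rewrite h0 /=; lia.
have opp_h : (- cage_edge_dist)%R = cage_edge_dist.
  have val_opp : nat_of_ord (- cage_edge_dist)%R = (N - nat_of_ord cage_edge_dist) %% N by [].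
  by apply: ord_inj; rewrite val_opp val_cage_edge_dist modn_small; lia.
have S_0 : ~~ cage_arc_dist 0 by [].
have S_h : ~~ cage_arc_dist cage_edge_dist by rewrite val_cage_edge_dist /cage_arc_dist; lia.
have mixed := circ_mixed h_neq0 opp_h S_0 S_h.
split=> //; first by rewrite -card_cage_arc_dist; exact: circ_regular.
split; first exact: cage_square.
case=> [|[|[|[|//]]]] _; first by case.
- exact: no_cycle1 mixed.
- by apply: circ_no_cycle2 S_h _; exact: cage_zero_sum2.
- by apply: circ_no_cycle3; exact: cage_no_zero_sum3.
Qed.

End Construction.

Lemma cage_order_decomposition z : 0 < z ->
  exists k (e : bool), z = 2 * k + 1 + e /\
    (2 * (3 * k.+1 + e)).-1.+1 = if odd z then 3 * (z + 1) else 3 * z + 2.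
Proof.
move=> z_gt0; have := odd_double_half z; rewrite -muln2.
case: (odd z) => /= z_half.
- by exists z./2, false; lia.
- by exists z./2.-1, true; lia.
Qed.

Theorem theorem9 :
  (forall z : nat, 1 <= z ->
     exists m : nat, mixed_cage_order z 1 4 m /\
       m <= (if odd z then 3 * (z + 1) else 3 * z + 2)) /\
  mixed_cage_order 1 1 4 6 /\ mixed_cage_order 2 1 4 8.
Proof.
split; [|split].
- move=> z z_gt0; have [k [e [-> order_eq]]] := cage_order_decomposition z_gt0.
  rewrite -order_eq; apply: mixed_cage_order_exists.
  by exists (@cage_edge k e), (@cage_arc k e); exact: cage_graph.
- split; first by exists (@cage_edge 0 false), (@cage_arc 0 false); exact: (cage_graph 0 false).
  by move=> n E A; apply: (@girth4_order_ge n 1).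
- split; first by exists (@cage_edge 0 true), (@cage_arc 0 true); exact: (cage_graph 0 true).
  by move=> n E A; apply: (@girth4_order_ge n 2).
Qed.
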